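(* Let $|\psi\rangle$ be a normalized $n$-qubit state such that the stabilizer of $|\psi\rangle^{\otimes 2}$ equals $\{\mathbb{1},\mathrm{SWAP}\}$. Let $\epsilon\in(0,1)$, and let $h_1,h_2\in\mathrm{GL}(2,\mathbb{C})$ with $H_1=h_1^\dagger h_1=\mathrm{diag}(1,\epsilon)$ and $H_2=h_2^\dagger h_2=\mathrm{diag}(\epsilon,1)$. Set $|\psi_i\rangle=(\mathbb{1}^{\otimes n-1}\otimes h_i)|\psi\rangle$ and $n_i=\||\psi_i\rangle\|$. Then the maximal success probability of transforming $|\psi\rangle^{\otimes 2}$ into the normalized state $|\psi_1\rangle\otimes|\psi_2\rangle/(n_1n_2)$ by separable operations equals $\frac{2}{1+\epsilon^2}(n_1n_2)^2$, and this probability is attained by an LOCC protocol. This value is strictly larger than $(n_1n_2)^2$, which is the product of the maximal separable-operation success probabilities of the single-state transformations $|\psi\rangle\mapsto|\psi_1\rangle/n_1$ and $|\psi\rangle\mapsto|\psi_2\rangle/n_2$.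
   Context: The two-copy state $|\psi\rangle^{\otimes 2}$ is an $n$-partite state in which party $i$ holds qubit $i$ of both copies (local dimension 4). The stabilizer of $|\psi\rangle^{\otimes 2}$ is the set of $S=\bigotimes_{i=1}^n S^{(i)}$ with $S^{(i)}\in\mathrm{GL}(4,\mathbb{C})$ and $S|\psi\rangle^{\otimes 2}=|\psi\rangle^{\otimes 2}$. $\mathrm{SWAP}=\mathrm{SWAP}^{\otimes n}$, where each party exchanges its two qubits. A separable operation is an operation with Kraus operators of product form $M_k=\bigotimes_i M_k^{(i)}$ with $\sum_k M_k^\dagger M_k\le\mathbb{1}$. Its success probability for a transformation $|a\rangle\mapsto|b\rangle$ of normalized states is $\sum_{k\in K}\|M_k|a\rangle\|^2$, where $K$ is the set of branches satisfying $M_k|a\rangle\propto|b\rangle$. The maximal success probability is the supremum of this over all separable operations. In each transformation the operator $h_i$ acts on the $n$-th party's qubit. *)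

From HB Require Import structures.
From mathcomp Require Import all_boot all_order all_algebra.
From mathcomp Require Import complex.
From mathcomp Require Import reals.

Set Implicit Arguments.
Unset Strict Implicit.
Unset Printing Implicit Defensive.

Import Order.TTheory GRing.Theory Num.Theory.
Local Open Scope ring_scope.

Section QuantumDefs.
Variable R : realType.
Local Notation C := R[i].

Definition cabs2 (z : C) : R := complex.Re z ^+ 2 + complex.Im z ^+ 2.

(* computational basis configurations: party i is in local basis state x i *)
Definition cfg (n d : nat) := {ffun 'I_n -> 'I_d}.
(* (unnormalized) pure states / vectors of the global Hilbert space *)
Definition vec (n d : nat) := cfg n d -> C.

Definition vnorm2 n d (v : vec n d) : R := \sum_(x : cfg n d) cabs2 (v x).

Definition vscale n d (c : C) (v : vec n d) : vec n d := fun x => c * v x.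

(* local operator family  M : 'I_n -> 'M_d  represents  \bigotimes_i M i *)
Definition prodop n d (M : 'I_n -> 'M[C]_d) (v : vec n d) : vec n d :=
  fun x => \sum_(y : cfg n d) (\prod_(i < n) M i (x i) (y i)) * v y.

Definition adj d (A : 'M[C]_d) : 'M[C]_d := (map_mx Num.conj A)^T.

Definition at_party n d (j : 'I_n) (h : 'M[C]_d) : 'I_n -> 'M[C]_d :=
  fun i => if i == j then h else 1%:M.

(* ---------- two copies: party i holds qubit i of both copies ---------- *)
(* local basis of party i (dimension 4):  k = 2 * a + b  with a the qubit of
   the first copy and b the qubit of the second copy *)
Definition hi4 (k : 'I_4) : 'I_2 := inord (k %/ 2).
Definition lo4 (k : 'I_4) : 'I_2 := inord (k %% 2).

Definition twocopy n (a b : vec n 2) : vec n 4 :=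
  fun x => a [ffun i => hi4 (x i)] * b [ffun i => lo4 (x i)].

(* local SWAP of the two qubits of a party: |a b> |-> |b a> *)
Definition swap4 : 'M[C]_4 :=
  \matrix_(k, l) (((hi4 k == lo4 l) && (lo4 k == hi4 l))%:R).

Definition in_stabilizer n d (v : vec n d) (op : vec n d -> vec n d) : Prop :=
  exists S : 'I_n -> 'M[C]_d,
    (forall i, S i \in unitmx) /\ op = prodop S /\ prodop S v = v.

(* a finite family of product Kraus operators  M_k = \bigotimes_i M_k^(i) *)
Definition kraus n d := seq ('I_n -> 'M[C]_d).

(* \sum_k M_k^dagger M_k <= 1, i.e.  <v| (1 - \sum_k M_k^dag M_k) |v> >= 0 *)
Definition separable_op n d (K : kraus n d) : Prop :=
  forall v : vec n d, \sum_(M <- K) vnorm2 (prodop M v) <= vnorm2 v.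

Definition proportional n d (u w : vec n d) : Prop :=
  exists c : C, u = vscale c w.

(* p is the success probability of the transformation a -> b with Kraus
   family K: the sum of ||M_k a||^2 over exactly the branches k with
   M_k a proportional to b *)
Definition success_prob n d (K : kraus n d) (a b : vec n d) (p : R) : Prop :=
  exists msk : seq bool,
    size msk = size K /\
    (forall k, (k < size K)%N ->
       (nth false msk k <-> proportional (prodop (nth (fun _ => 1%:M) K k) a) b)) /\
    p = \sum_(M <- mask msk K) vnorm2 (prodop M a).

Definition ofR (x : R) : C := Complex x 0.

Definition is_max_sep_prob n d (a b : vec n d) (p : R) : Prop :=
  (forall (K : kraus n d) (q : R), separable_op K -> success_prob K a b q -> q <= p) /\
  (forall u : R,
     (forall (K : kraus n d) (q : R), separable_op K -> success_prob K a b q -> q <= u) ->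
     p <= u).

(* In each round one party  i  applies a local instrument with Kraus operators
   A_0, ..., A_{K-1} on its system and broadcasts the outcome k; the rest of
   the protocol ([next k]) may depend on all outcomes so far. *)
Inductive locc (n d : nat) : Type :=
| LStop
| LRound (i : 'I_n) (K : nat) (A : 'I_K -> 'M[C]_d) (next : 'I_K -> locc n d).

Definition cvnorm2 d (v : 'cV[C]_d) : R := \sum_(j < d) cabs2 (v j 0).

Fixpoint locc_ok n d (P : locc n d) : Prop :=
  match P with
  | LStop => True
  | LRound i K A next =>
      (forall v : 'cV[C]_d, \sum_(k < K) cvnorm2 (A k *m v) <= cvnorm2 v) /\
      (forall k, locc_ok (next k))
  end.

(* the product Kraus operators of all branches of the protocol
   (a later round is applied after an earlier one) *)
Fixpoint branches n d (P : locc n d) : kraus n d :=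
  match P with
  | LStop => [:: fun _ => 1%:M]
  | LRound i K A next =>
      flatten [seq [seq (fun j => N j *m at_party i (A k) j) | N <- branches (next k)]
              | k <- enum 'I_K]
  end.

End QuantumDefs.

(* The stabilizer hypothesis makes every successful branch rigid.  If a
   product operator N maps psi (x) psi to c G (psi (x) psi), with G a product of
   invertible factors and c <> 0, then every local factor of N is invertible (a
   singular factor would yield a local stabilizer 1 + X with X of rank one), so
   G^-1 N / c stabilizes psi (x) psi and N = c G or N = c G SWAP as operators.
   Evaluating N on product basis states then fixes |c|: for the single-copy task
   (applied to the doubled branch M (x) M) |c|^2 = ||M e_a||^2, where h_i is
   isometric on e_a, and for the two-copy task
   |c|^2 (1 + eps^2) = ||N (e_0 (x) e_1)||^2 + ||N (e_1 (x) e_0)||^2.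
   The completeness relation of the Kraus operators then bounds the success
   probabilities by n_i^2 and 2 (n_1 n_2)^2 / (1 + eps^2).  The latter bound is
   attained by the LOCC protocol in which the last party applies the instrument
   {A, A SWAP}, A = (h_1 (x) h_2) / sqrt (1 + eps^2), followed on the second
   outcome by SWAPs at all other parties: on the SWAP-invariant input both
   branches act as A. *)

From HB Require Import structures.
From mathcomp Require Import all_boot all_order all_algebra.
From mathcomp Require Import complex mxtens.
From mathcomp Require Import reals.
From mathcomp Require Import ring lra.
From Stdlib Require Import FunctionalExtensionality.

Set Implicit Arguments.
Unset Strict Implicit.
Unset Printing Implicit Defensive.

Import Order.TTheory GRing.Theory Num.Theory ComplexField.
Local Open Scope ring_scope.

Lemma unitmx_1Drank1 (F : fieldType) m (u : 'cV[F]_m) (w : 'rV[F]_m) :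
  1 + (w *m u) 0 0 != 0 -> 1%:M + u *m w \in unitmx.
Proof.
set a := (w *m u) 0 0 => a1; set X := u *m w.
have XX : X *m X = a *: X.
  by rewrite mulmxA -[u *m w *m u]mulmxA [w *m u]mx11_scalar mul_mx_scalar scalemxAl.
(* Sherman-Morrison *)
suff : (1%:M + X) *m (1%:M - (1 + a)^-1 *: X) = 1%:M by case/mulmx1_unit.
rewrite mulmxDl !mulmxDr !mulmx1 mul1mx !mulmxN -scalemxAr XX scalerA addrACA -opprD.
have -> : (1 + a)^-1 *: X + (1 + a)^-1 * a *: X = X.
  by rewrite -scalerDl -{1}[(1 + a)^-1]mulr1 -mulrDr mulVf // scale1r.
by rewrite addrK.
Qed.

Section ProductOperators.
Variable R : realType.
Local Notation C := R[i].

Lemma ofR_inj : injective (@ofR R). Proof. by move=> a b []. Qed.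

Lemma ofR_eq0 (x : R) : (ofR x == 0) = (x == 0).
Proof. exact: (inj_eq ofR_inj x 0). Qed.

Lemma ofRM (x y : R) : ofR (x * y) = ofR x * ofR y.
Proof. exact: (rmorphM (real_complex R)). Qed.

Lemma ofR_sum (I : Type) (r : seq I) (F : I -> R) :
  ofR (\sum_(i <- r) F i) = \sum_(i <- r) ofR (F i).
Proof. exact: (rmorph_sum (real_complex R)). Qed.

Lemma conj_ofR (x : R) : Num.conj (ofR x) = ofR x.
Proof. by rewrite /ofR; change (Complex x (- 0) = Complex x 0); rewrite oppr0. Qed.

Lemma cabs2E (z : C) : ofR (cabs2 z) = Num.conj z * z.
Proof. by case: z => a b; rewrite /cabs2 /=; simpc; rewrite !expr2 [b * a]mulrC subrr. Qed.

Lemma cabs2_ge0 (z : C) : 0 <= cabs2 z.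
Proof. by rewrite /cabs2 addr_ge0 // sqr_ge0. Qed.

Lemma cabs2M (z w : C) : cabs2 (z * w) = cabs2 z * cabs2 w.
Proof. by case: z w => [a b] [c d]; rewrite /cabs2 /=; ring. Qed.

Lemma cabs2_ofR (x : R) : cabs2 (ofR x) = x ^+ 2.
Proof. by rewrite /cabs2 /= expr0n addr0. Qed.

Lemma sum_cabs2_diag_gram (X Y : finType) (K : X -> Y -> C) (D : Y -> R) (v : Y -> C) :
  (forall y y', \sum_x Num.conj (K x y) * K x y' = ofR ((y == y')%:R * D y)) ->
  \sum_x cabs2 (\sum_y K x y * v y) = \sum_y D y * cabs2 (v y).
Proof.
move=> gram; apply: ofR_inj; rewrite !ofR_sum.
transitivity (\sum_y \sum_y' Num.conj (v y) * v y' * ofR ((y == y')%:R * D y)).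
  under eq_bigr => x _ do rewrite cabs2E rmorph_sum big_distrl /=.
  rewrite exchange_big /=; apply: eq_bigr => y _.
  under eq_bigr => x _ do rewrite big_distrr /=.
  rewrite exchange_big /=; apply: eq_bigr => y' _.
  rewrite -gram mulr_sumr; apply: eq_bigr => x _; rewrite rmorphM /=; ring.
apply: eq_bigr => y _; rewrite (bigD1 y) //= big1 ?addr0 => [|y' /negbTE].
  by rewrite eqxx mul1r ofRM cabs2E; ring.
by rewrite eq_sym => ->; rewrite mul0r mulr0.
Qed.

Lemma row_if_ofR (x y : R) :
  \row_(k < 2) (if k == 0 then ofR x else ofR y) = \row_k ofR (if k == 0 then x else y).
Proof. by apply/rowP => k; rewrite !mxE; case: (k == 0). Qed.

Section Vectors.
Variables n d : nat.
Implicit Types (v : vec R n d) (x y z : cfg n d) (i j : 'I_n) (M A B G : 'I_n -> 'M[C]_d).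

Definition ket z : vec R n d := fun x => (x == z)%:R.

Lemma vnorm2_ge0 v : 0 <= vnorm2 v.
Proof. by rewrite /vnorm2 sumr_ge0 // => x _; apply: cabs2_ge0. Qed.

Lemma vnorm2Z c v : vnorm2 (vscale c v) = cabs2 c * vnorm2 v.
Proof. by rewrite /vnorm2 mulr_sumr; apply: eq_bigr => x _; rewrite cabs2M. Qed.

Lemma vnorm2_ket z : vnorm2 (ket z) = 1.
Proof.
rewrite /vnorm2 (bigD1 z) //= /ket eqxx big1 => [|x /negbTE ->].
  by rewrite cabs2_ofR expr1n addr0.
by rewrite cabs2_ofR expr0n.
Qed.

Lemma vscaleA c c' v : vscale c (vscale c' v) = vscale (c * c') v.
Proof. by apply: functional_extensionality => x; rewrite /vscale mulrA. Qed.

Lemma vscale1 v : vscale 1 v = v.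
Proof. by apply: functional_extensionality => x; rewrite /vscale mul1r. Qed.

Lemma vscaleK c v : c != 0 -> vscale c^-1 (vscale c v) = v.
Proof. by move=> c0; rewrite vscaleA mulVf ?vscale1. Qed.

Lemma eq_prodop A B : A =1 B -> prodop A = prodop B.
Proof.
move=> AB; apply: functional_extensionality => v; apply: functional_extensionality => x.
by apply: eq_bigr => y _; congr (_ * _); apply: eq_bigr => i _; rewrite AB.
Qed.

Lemma prod_eq_ffun x y : \prod_(i < n) ((x i == y i)%:R : C) = (x == y)%:R.
Proof.
have [->|xy] := eqVneq x y; first by rewrite big1 // => i _; rewrite eqxx.
case: (pickP (fun i => x i != y i)) => [i /negbTE xyi | same].
  by rewrite (bigD1 i) //= xyi mul0r.
by case/eqP: xy; apply/ffunP => i; apply/eqP/negbFE/same.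
Qed.

Lemma prodop1 v : prodop (fun _ => 1%:M) v = v.
Proof.
apply: functional_extensionality => x; rewrite /prodop.
under eq_bigr do under eq_bigr do rewrite mxE.
under eq_bigr do rewrite prod_eq_ffun.
rewrite (bigD1 x) //= eqxx mul1r big1 ?addr0 // => y /negbTE.
by rewrite eq_sym => ->; rewrite mul0r.
Qed.

Lemma prodopM A B v : prodop A (prodop B v) = prodop (fun i => A i *m B i) v.
Proof.
apply: functional_extensionality => x; rewrite /prodop.
under eq_bigr do rewrite big_distrr /=.
rewrite exchange_big /=; apply: eq_bigr => z _.
under eq_bigr do rewrite mulrA.
rewrite -big_distrl /=; congr (_ * _).
under [RHS]eq_bigr do rewrite mxE.
by rewrite bigA_distr_bigA /=; apply: eq_bigr => y _; rewrite -big_split.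
Qed.

Lemma prodopK G : (forall i, G i \in unitmx) ->
  cancel (prodop G) (prodop (fun i => invmx (G i))).
Proof.
by move=> GU v; rewrite prodopM (@eq_prodop _ (fun _ => 1%:M)) ?prodop1 // => i; rewrite mulVmx.
Qed.

Lemma prodopVK G : (forall i, G i \in unitmx) ->
  cancel (prodop (fun i => invmx (G i))) (prodop G).
Proof.
by move=> GU v; rewrite prodopM (@eq_prodop _ (fun _ => 1%:M)) ?prodop1 // => i; rewrite mulmxV.
Qed.

Lemma prodopZ M c v : prodop M (vscale c v) = vscale c (prodop M v).
Proof.
apply: functional_extensionality => x; rewrite /prodop /vscale mulr_sumr.
by apply: eq_bigr => y _; rewrite mulrCA.
Qed.

Lemma prodop0 (M : 'I_n -> 'M[C]_d) : prodop M (fun _ => 0) = fun _ => 0.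
Proof.
by apply: functional_extensionality => x; rewrite /prodop big1 // => y _; rewrite mulr0.
Qed.

Lemma prodop_ket M z x : prodop M (ket z) x = \prod_i M i (x i) (z i).
Proof.
rewrite /prodop (bigD1 z) //= /ket eqxx mulr1 [X in _ + X]big1 ?addr0 // => y /negbTE ->.
by rewrite mulr0.
Qed.

Lemma prodop_eq0 M j v : M j = 0 -> prodop M v = fun _ => 0.
Proof.
move=> Mj0; apply: functional_extensionality => x; rewrite /prodop big1 // => y _.
by rewrite (bigD1 j) //= Mj0 mxE !mul0r.
Qed.

Lemma prodop_at_scalar j c v : prodop (at_party j c%:M) v = vscale c v.
Proof.
rewrite -[in RHS](prodop1 v) /vscale; apply: functional_extensionality => x.
rewrite /prodop mulr_sumr; apply: eq_bigr => y _; rewrite mulrA; congr (_ * _).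
rewrite (bigD1 j) //= [in RHS](bigD1 j) //= /at_party eqxx !mxE mulrA mulr_natr.
by congr (_ * _); apply: eq_bigr => i /negbTE ->.
Qed.

Lemma prodop_atZ j c (X : 'M[C]_d) v :
  prodop (at_party j (c *: X)) v = vscale c (prodop (at_party j X) v).
Proof.
rewrite -(prodop_at_scalar j) prodopM; congr prodop; apply: functional_extensionality => i.
by rewrite /at_party; case: (i == j); rewrite ?mul1mx ?mul_scalar_mx.
Qed.

Lemma prodop_atD j (X Y : 'M[C]_d) v x :
  prodop (at_party j (X + Y)) v x = prodop (at_party j X) v x + prodop (at_party j Y) v x.
Proof.
rewrite /prodop -big_split /=; apply: eq_bigr => y _; rewrite -mulrDl; congr (_ * _).
rewrite (bigD1 j) //= [X in _ = X + _](bigD1 j) //= [X in _ = _ + X](bigD1 j) //=.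
rewrite /at_party eqxx mxE mulrDl.
by congr (_ * _ + _ * _); apply: eq_bigr => i /negbTE ->.
Qed.

Lemma at_party_unit j (X : 'M[C]_d) i : X \in unitmx -> at_party j X i \in unitmx.
Proof. by rewrite /at_party; case: (i == j) => // _; apply: unitmx1. Qed.

Lemma adjmx1 : adj (1%:M : 'M[C]_d) = 1%:M.
Proof. by rewrite /adj map_mx1 trmx1. Qed.

Lemma adjmxZ c (X : 'M[C]_d) : adj (c *: X) = Num.conj c *: adj X.
Proof. by apply/matrixP => k l; rewrite /adj !mxE rmorphM. Qed.

Lemma prodop_gram M y y' :
  \sum_(x : cfg n d) Num.conj (\prod_i M i (x i) (y i)) * \prod_i M i (x i) (y' i) =
  \prod_i (adj (M i) *m M i) (y i) (y' i).
Proof.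
under [RHS]eq_bigr do rewrite mxE.
rewrite bigA_distr_bigA /=; apply: eq_bigr => x _.
by rewrite rmorph_prod -big_split; apply: eq_bigr => i _; rewrite /adj !mxE.
Qed.

Lemma vnorm2_prodop_at j (X : 'M[C]_d) (D : 'I_d -> R) v :
  adj X *m X = diag_mx (\row_k ofR (D k)) ->
  vnorm2 (prodop (at_party j X) v) = \sum_(y : cfg n d) D (y j) * cabs2 (v y).
Proof.
move=> gramX; apply: sum_cabs2_diag_gram => y y'; rewrite prodop_gram.
have factorE i : (adj (at_party j X i) *m at_party j X i) (y i) (y' i) =
    (y i == y' i)%:R * ofR (if i == j then D (y i) else 1).
  rewrite /at_party; case: (i == j); last by rewrite adjmx1 mulmx1 mxE mulr1.
  by rewrite gramX !mxE mulr_natl.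
under eq_bigr do rewrite factorE.
rewrite big_split /= prod_eq_ffun (bigD1 j) //= eqxx big1 => [|i /negbTE -> //].
by rewrite mulr1 ofRM; case: (y == y'); rewrite /= ?mul1r ?mul0r.
Qed.

Lemma vnorm2_prodop_at_ge j (X : 'M[C]_d) (D : 'I_d -> R) m v :
  adj X *m X = diag_mx (\row_k ofR (D k)) -> (forall k, m <= D k) ->
  m * vnorm2 v <= vnorm2 (prodop (at_party j X) v).
Proof.
move=> gramX D_ge; rewrite (vnorm2_prodop_at _ _ gramX) /vnorm2 mulr_sumr.
by apply: ler_sum => y _; rewrite ler_wpM2r ?cabs2_ge0.
Qed.

End Vectors.

Lemma cvnorm2_mul_diag d (A : 'M[C]_d) (D : 'I_d -> R) (v : 'cV[C]_d) :
  adj A *m A = diag_mx (\row_k ofR (D k)) ->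
  cvnorm2 (A *m v) = \sum_k D k * cabs2 (v k 0).
Proof.
move=> gramA; rewrite /cvnorm2; under eq_bigr do rewrite mxE.
apply: (sum_cabs2_diag_gram (K := A) (fun k => v k 0)) => k l.
have -> : \sum_x Num.conj (A x k) * A x l = (adj A *m A) k l.
  by rewrite mxE; apply: eq_bigr => x _; rewrite /adj !mxE.
by rewrite gramA !mxE; case: (k == l); rewrite ?mulr1n ?mulr0n ?mul1r ?mul0r.
Qed.

Section LocalOperators.
Variables n d : nat.

Definition cfg_at (j : 'I_n) (a : 'I_d.+1) : cfg n d.+1 :=
  [ffun i => if i == j then a else ord0].

Lemma cfg_at_id j a : cfg_at j a j = a.
Proof. by rewrite ffunE eqxx. Qed.

Lemma eq_cfg_at j a b : (cfg_at j a == cfg_at j b) = (a == b).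
Proof. by apply/eqP/eqP => [/ffunP/(_ j)|->]; rewrite ?cfg_at_id. Qed.

Lemma prodop_at_ket j (Y : 'M[C]_d.+1) a b :
  prodop (at_party j Y) (ket (cfg_at j b)) (cfg_at j a) = Y a b.
Proof.
rewrite prodop_ket (bigD1 j) //= /at_party eqxx !cfg_at_id big1 ?mulr1 // => i /negbTE ji.
by rewrite ji !ffunE ji mxE.
Qed.

Lemma vnorm2_prodop_at_ket j (X : 'M[C]_d.+1) (D : 'I_d.+1 -> R) a :
  adj X *m X = diag_mx (\row_k ofR (D k)) ->
  vnorm2 (prodop (at_party j X) (ket (cfg_at j a))) = D a.
Proof.
move=> gramX; rewrite (vnorm2_prodop_at _ _ gramX) (bigD1 (cfg_at j a)) //= big1.
  by rewrite /ket eqxx cfg_at_id cabs2_ofR expr1n mulr1 addr0.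
by move=> y /negbTE ya; rewrite /ket ya cabs2_ofR expr0n mulr0.
Qed.

Lemma prodop_rank1_eq0 (a : vec R n d) (N G : 'I_n -> 'M[C]_d) c j
    (w : 'rV[C]_d) (u : 'cV[C]_d) :
  c != 0 -> (forall i, G i \in unitmx) -> prodop N a = vscale c (prodop G a) ->
  w *m N j = 0 -> prodop (at_party j (u *m (w *m G j))) a = fun _ => 0.
Proof.
move=> c0 GU Na wN; apply: (can_inj (prodopK GU)); rewrite prodop0 prodopM.
have commute i : G i *m at_party j (u *m (w *m G j)) i = at_party j (G j *m u *m w) i *m G i.
  by rewrite /at_party; case: eqP => [->|_]; rewrite ?mulmxA ?mulmx1 ?mul1mx.
rewrite (eq_prodop commute) -prodopM -[prodop G a](vscaleK _ c0) -Na prodopZ prodopM.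
rewrite (@prodop_eq0 _ _ _ j) ?prodop0 //.
  by apply: functional_extensionality => x; rewrite /vscale mulr0.
by rewrite /at_party eqxx -mulmxA wN mulmx0.
Qed.

End LocalOperators.

End ProductOperators.

Arguments ket {R n d} z _.

Section TwoCopies.
Variable R : realType.
Local Notation C := R[i].

(* [comb a b] is the local index 2 a + b of [twocopy], i.e. the Kronecker
   index of [mxtens]. *)
Definition comb (a b : 'I_2) : 'I_4 := mxtens_index (a, b).

Lemma hi4E (k : 'I_4) : hi4 k = (@mxtens_unindex 2 2 k).1.
Proof. by apply: val_inj; rewrite /= inordK // ltn_divLR. Qed.

Lemma lo4E (k : 'I_4) : lo4 k = (@mxtens_unindex 2 2 k).2.
Proof. by apply: val_inj; rewrite /= inordK // ltn_mod. Qed.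

Lemma hi4_comb a b : hi4 (comb a b) = a.
Proof. by rewrite hi4E mxtens_indexK. Qed.

Lemma lo4_comb a b : lo4 (comb a b) = b.
Proof. by rewrite lo4E mxtens_indexK. Qed.

Lemma combK (k : 'I_4) : comb (hi4 k) (lo4 k) = k.
Proof. by rewrite /comb hi4E lo4E -surjective_pairing mxtens_unindexK. Qed.

Lemma eq_comb (k : 'I_4) a b : (k == comb a b) = (hi4 k == a) && (lo4 k == b).
Proof.
apply/eqP/andP => [->|[/eqP <- /eqP <-]]; last by rewrite combK.
by rewrite hi4_comb lo4_comb.
Qed.

Lemma tensE (A B : 'M[C]_2) (k l : 'I_4) :
  (A *t B) k l = A (hi4 k) (hi4 l) * B (lo4 k) (lo4 l).
Proof. by rewrite mxE !hi4E !lo4E. Qed.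

Lemma adj_tens (A B : 'M[C]_2) : adj (A *t B : 'M_4) = adj A *t adj B.
Proof. by apply/matrixP => k l; rewrite tensE /adj !mxE rmorphM !hi4E !lo4E. Qed.

Lemma tensmx_mul4 (A B A' B' : 'M[C]_2) :
  (A *t B : 'M_4) *m (A' *t B' : 'M_4) = (A *m A') *t (B *m B').
Proof. exact: (@tensmx_mul _ 2 2 2 2 2 2). Qed.

Lemma tensmx11 : (1%:M : 'M[C]_2) *t (1%:M : 'M[C]_2) = 1%:M :> 'M[C]_4.
Proof.
apply/matrixP => k l; rewrite tensE !mxE -[l in RHS]combK eq_comb.
by rewrite -natrM mulnb.
Qed.

Definition sw4 (k : 'I_4) : 'I_4 := comb (lo4 k) (hi4 k).

Lemma hi4_sw k : hi4 (sw4 k) = lo4 k. Proof. exact: hi4_comb. Qed.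
Lemma lo4_sw k : lo4 (sw4 k) = hi4 k. Proof. exact: lo4_comb. Qed.

Lemma sw4K : involutive sw4.
Proof. by move=> k; rewrite /sw4 hi4_sw lo4_sw combK. Qed.

Lemma sw40 : sw4 0 = 0.
Proof. by apply: val_inj; rewrite /sw4 /comb /hi4 /lo4 /= !inordK. Qed.

Lemma swap4E (k l : 'I_4) : swap4 R k l = (l == sw4 k)%:R.
Proof. by rewrite mxE eq_comb andbC [hi4 l == _]eq_sym [lo4 l == _]eq_sym. Qed.

Lemma swap4_mul_col (v : 'cV[C]_4) k : (swap4 R *m v) k 0 = v (sw4 k) 0.
Proof.
rewrite mxE (bigD1 (sw4 k)) //= swap4E eqxx mul1r big1 ?addr0 // => l /negbTE lk.
by rewrite swap4E lk mul0r.
Qed.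

Lemma cvnorm2_swap4 (v : 'cV[C]_4) : cvnorm2 (swap4 R *m v) = cvnorm2 v.
Proof.
rewrite /cvnorm2; under eq_bigr do rewrite swap4_mul_col.
by rewrite [RHS](reindex_inj (inv_inj sw4K)).
Qed.

Section Configurations.
Variable n : nat.
Implicit Types (a b : vec R n 2) (A B : 'I_n -> 'M[C]_2) (x : cfg n 4) (y z : cfg n 2).

Definition combf y z : cfg n 4 := [ffun i => comb (y i) (z i)].
Definition hif x : cfg n 2 := [ffun i => hi4 (x i)].
Definition lof x : cfg n 2 := [ffun i => lo4 (x i)].
Definition swf x : cfg n 4 := [ffun i => sw4 (x i)].

Lemma hif_comb y z : hif (combf y z) = y.
Proof. by apply/ffunP => i; rewrite !ffunE hi4_comb. Qed.

Lemma lof_comb y z : lof (combf y z) = z.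
Proof. by apply/ffunP => i; rewrite !ffunE lo4_comb. Qed.

Lemma combfK x : combf (hif x) (lof x) = x.
Proof. by apply/ffunP => i; rewrite !ffunE combK. Qed.

Lemma hif_swf x : hif (swf x) = lof x.
Proof. by apply/ffunP => i; rewrite !ffunE hi4_sw. Qed.

Lemma lof_swf x : lof (swf x) = hif x.
Proof. by apply/ffunP => i; rewrite !ffunE lo4_sw. Qed.

Lemma swfK : involutive swf.
Proof. by move=> x; apply/ffunP => i; rewrite !ffunE sw4K. Qed.

Lemma sum_cfg4 (V : nmodType) (F : cfg n 4 -> V) :
  \sum_x F x = \sum_y \sum_z F (combf y z).
Proof.
rewrite pair_big /= (reindex (fun p : cfg n 2 * cfg n 2 => combf p.1 p.2)) //=.
exists (fun x => (hif x, lof x)) => [[y z] _ | x _] /=.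
  by rewrite hif_comb lof_comb.
by rewrite combfK.
Qed.

Lemma twocopyE a b x : twocopy a b x = a (hif x) * b (lof x).
Proof. by []. Qed.

Lemma twocopy_prodop A B a b :
  twocopy (prodop A a) (prodop B b) = prodop (fun i => A i *t B i) (twocopy a b).
Proof.
apply: functional_extensionality => x.
rewrite twocopyE /prodop sum_cfg4 big_distrl /=; apply: eq_bigr => y _.
rewrite big_distrr /=; apply: eq_bigr => z _.
rewrite twocopyE hif_comb lof_comb.
have -> : \prod_i (A i *t B i) (x i) (combf y z i) =
    \prod_i A i (hif x i) (y i) * \prod_i B i (lof x i) (z i).
  rewrite -big_split /=; apply: eq_bigr => i _.
  by rewrite tensE !ffunE hi4_comb lo4_comb.
by ring.
Qed.

Lemma vnorm2_twocopy a b : vnorm2 (twocopy a b) = vnorm2 a * vnorm2 b.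
Proof.
rewrite /vnorm2 sum_cfg4 big_distrl /=; apply: eq_bigr => y _.
rewrite big_distrr /=; apply: eq_bigr => z _.
by rewrite twocopyE hif_comb lof_comb cabs2M.
Qed.

Lemma twocopyZ a b c c' :
  twocopy (vscale c a) (vscale c' b) = vscale (c * c') (twocopy a b).
Proof. by apply: functional_extensionality => x; rewrite /vscale !twocopyE; ring. Qed.

Lemma at_party_tens (j : 'I_n) (X Y : 'M[C]_2) i :
  at_party j X i *t at_party j Y i = at_party j (X *t Y) i.
Proof. by rewrite /at_party; case: (i == j); rewrite ?tensmx11. Qed.

Lemma twocopy_prodop_at (j : 'I_n) (X Y : 'M[C]_2) a b :
  twocopy (prodop (at_party j X) a) (prodop (at_party j Y) b) =
  prodop (at_party j (X *t Y)) (twocopy a b).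
Proof. by rewrite twocopy_prodop (eq_prodop (at_party_tens j X Y)). Qed.

Lemma prodop_swapE (v : vec R n 4) x : prodop (fun _ => swap4 R) v x = v (swf x).
Proof.
have prodE (y : cfg n 4) : \prod_i swap4 R (x i) (y i) = (y == swf x)%:R.
  by rewrite -prod_eq_ffun; apply: eq_bigr => i _; rewrite swap4E ffunE.
rewrite /prodop; under eq_bigr do rewrite prodE.
rewrite (bigD1 (swf x)) //= eqxx mul1r big1 ?addr0 // => x0 /negbTE ->.
by rewrite mul0r.
Qed.

Lemma prodop_swap_twocopy a b : prodop (fun _ => swap4 R) (twocopy a b) = twocopy b a.
Proof.
apply: functional_extensionality => x.
by rewrite prodop_swapE !twocopyE hif_swf lof_swf mulrC.
Qed.

End Configurations.

End TwoCopies.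

Section SwapStabilizer.
Variables (R : realType) (n : nat).
Local Notation C := R[i].

Definition stabilizer_is_swap (v : vec R n 4) : Prop :=
  forall op : vec R n 4 -> vec R n 4,
    in_stabilizer v op <->
    (op = prodop (fun _ => 1%:M) \/ op = prodop (fun _ => swap4 R)).

Variable src : vec R n 4.
Hypothesis src_stab : stabilizer_is_swap src.

Lemma stabilizer_cases (S : 'I_n -> 'M[C]_4) :
  (forall i, S i \in unitmx) -> prodop S src = src ->
  (forall v, prodop S v = v) \/ (forall v, prodop S v = prodop (fun _ => swap4 R) v).
Proof.
move=> SU Ssrc; have : in_stabilizer src (prodop S) by exists S.
by case/src_stab => ->; [left|right] => // v; rewrite prodop1.
Qed.

Lemma local_stabilizer j (Y : 'M[C]_4) :
  Y \in unitmx -> prodop (at_party j Y) src = src -> Y = 1%:M \/ Y = swap4 R.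
Proof.
move=> YU Ysrc; have YjU i : at_party j Y i \in unitmx by apply: at_party_unit.
have [fix1|fixsw] := stabilizer_cases YjU Ysrc.
  left; apply/matrixP => a b; rewrite -(prodop_at_ket j) fix1 /ket eq_cfg_at mxE.
  by rewrite eq_sym.
right; apply/matrixP => a b; rewrite -(prodop_at_ket j) fixsw prodop_swapE /ket swap4E.
suff -> : swf (cfg_at j a) = cfg_at j (sw4 a) by rewrite eq_cfg_at eq_sym.
by apply/ffunP => i; rewrite !ffunE; case: (i == j); rewrite ?sw40.
Qed.

(* A singular factor N j gives a rank-one X with 1 + X at party j fixing src;
   this is impossible since both 1 and SWAP have first row e_0. *)
Lemma proportional_prodop_unit (N G : 'I_n -> 'M[C]_4) c :
  c != 0 -> (forall i, G i \in unitmx) ->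
  prodop N src = vscale c (prodop G src) -> forall j, N j \in unitmx.
Proof.
move=> c0 GU Nsrc j; apply: contraT => NjU.
have [w /sub_kermxP wN w0] : exists2 w : 'rV_4, (w <= kermx (N j))%MS & w != 0.
  by apply/rowV0Pn; rewrite kermx_eq0 row_free_unit.
set w' := w *m G j.
have w'0 : w' != 0.
  by apply: contraNneq w0 => w'0; rewrite -(mulmxK (GU j) w) -/w' w'0 mul0mx.
(* t keeps 1 + t w'_0 away from 0, so that 1 + X is invertible. *)
set t : C := if w' 0 0 == -1 then -1 else 1.
have t0 : t != 0 by rewrite /t; case: ifP => _; rewrite ?oppr_eq0 oner_eq0.
pose u : 'cV[C]_4 := t *: delta_mx 0 0; pose X := u *m w'.
have Xsrc : prodop (at_party j (1%:M + X)) src = src.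
  apply: functional_extensionality => x.
  by rewrite prodop_atD prodop_at_scalar vscale1 (prodop_rank1_eq0 _ c0 GU Nsrc wN) addr0.
have XU : 1%:M + X \in unitmx.
  apply: unitmx_1Drank1; rewrite /u -scalemxAr -colE mxE [col _ _ _ _]mxE /t.
  case: (w' 0 0 =P -1) => [->|/eqP ne].
    by rewrite mulN1r opprK -mulr2n mulrn_eq0 oner_eq0.
  by rewrite mul1r addrC addr_eq0.
have X0 b : X 0 b = 0.
  have row0 : (1%:M + X) 0 b = (0 == b)%:R.
    case: (local_stabilizer XU Xsrc) => ->; first by rewrite mxE.
    by rewrite swap4E sw40 eq_sym.
  by move: row0; rewrite [(_ + X) _ _]mxE [1%:M _ _]mxE -[RHS]addr0 => /addrI.
case/eqP: w'0; apply/rowP => b; rewrite [RHS]mxE; apply/eqP; move: (X0 b).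
rewrite [X _ _]mxE big_ord1 [u _ _]mxE [delta_mx _ _ _ _]mxE mulr1.
by move/eqP; rewrite mulf_eq0 (negbTE t0).
Qed.

Lemma proportional_prodop_cases (N G : 'I_n -> 'M[C]_4) c (k : 'I_n) :
  c != 0 -> (forall i, G i \in unitmx) ->
  prodop N src = vscale c (prodop G src) ->
  (forall v, prodop N v = vscale c (prodop G v)) \/
  (forall v, prodop N v = vscale c (prodop G (prodop (fun _ => swap4 R) v))).
Proof.
move=> c0 GU Nsrc; have NU := proportional_prodop_unit c0 GU Nsrc.
pose S i := at_party k (c^-1)%:M i *m (invmx (G i) *m N i).
have SE v : prodop S v = vscale c^-1 (prodop (fun i => invmx (G i)) (prodop N v)).
  rewrite -(prodop_at_scalar k) !prodopM; congr prodop.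
  by apply: functional_extensionality => i; rewrite /S mulmxA.
have SU i : S i \in unitmx.
  rewrite unitmx_mul at_party_unit ?unitmx_mul ?unitmx_inv ?GU ?NU //.
  by rewrite -scalemx1 unitmxZ ?unitmx1 // unitfE invr_eq0.
have Ssrc : prodop S src = src by rewrite SE Nsrc prodopZ prodopK // vscaleK.
have NE v : prodop N v = vscale c (prodop G (prodop S v)).
  by rewrite SE prodopZ vscaleA mulfV // vscale1 prodopVK.
by case: (stabilizer_cases SU Ssrc) => SS; [left|right] => v; rewrite NE SS.
Qed.

End SwapStabilizer.

Section SuccessProbability.
Variable R : realType.
Local Notation C := R[i].

Section Bounds.
Variables (n d : nat) (a b : vec R n d).

Lemma success_prob_le (K : kraus R n d) q (g : ('I_n -> 'M[C]_d) -> R) :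
  (forall M, 0 <= g M) ->
  (forall M, proportional (prodop M a) b -> vnorm2 (prodop M a) <= g M) ->
  success_prob K a b q -> q <= \sum_(M <- K) g M.
Proof.
move=> g_ge0 le_g [msk [+ [+ ->]]].
elim: K msk => [|M K IH] [|m msk] //=; first by rewrite !big_nil.
move=> [sz] mskP; rewrite !big_cons.
have IH' := IH msk sz (fun k => mskP k.+1).
have := mskP 0%N isT; clear mskP; case: m => /= [[prop _]|_]; rewrite ?big_cons.
  by rewrite lerD // le_g //; apply: prop.
exact: ler_wpDl.
Qed.

Lemma is_max_sep_probP p :
  (forall K q, separable_op K -> success_prob K a b q -> q <= p) ->
  (exists2 K : kraus R n d, separable_op K & success_prob K a b p) ->
  is_max_sep_prob a b p.
Proof. by move=> le_p [K sepK succK]; split => // u le_u; apply: le_u succK. Qed.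

End Bounds.

Section SingleCopy.
Variables (n : nat) (j : 'I_n) (psi : vec R n 2).
Hypothesis psi2_stab : stabilizer_is_swap (twocopy psi psi).
Variables (h : 'M[C]_2) (D : 'I_2 -> R) (a : 'I_2).
Hypotheses (hU : h \in unitmx) (gram_h : adj h *m h = diag_mx (\row_k ofR (D k))).
Hypothesis Da : D a = 1.
Variable m : R.
Hypotheses (m_gt0 : 0 < m) (D_bounds : forall k, m <= D k <= 1).
Hypothesis psi_normed : vnorm2 psi = 1.

Local Notation psi1 := (prodop (at_party j h) psi).

(* On two copies the stabilizer hypothesis applies, and both N = c^2 (h (x) h)
   and N = c^2 (h (x) h) SWAP agree on the SWAP-invariant input e_a (x) e_a. *)
Lemma single_copy_cabs2 (M : 'I_n -> 'M[C]_2) c :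
  c != 0 -> prodop M psi = vscale c psi1 ->
  cabs2 c = vnorm2 (prodop M (ket (cfg_at j a))).
Proof.
move=> c0 Mpsi; set e := ket (cfg_at j a).
have hhU i : at_party j (h *t h) i \in unitmx by rewrite at_party_unit // tensmx_unit.
have M2psi : prodop (fun i => M i *t M i) (twocopy psi psi) =
    vscale (c * c) (prodop (at_party j (h *t h)) (twocopy psi psi)).
  by rewrite -twocopy_prodop -twocopy_prodop_at Mpsi; apply: twocopyZ.
have M2e : prodop (fun i => M i *t M i) (twocopy e e) =
    vscale (c * c) (prodop (at_party j (h *t h)) (twocopy e e)).
  have cc0 : c * c != 0 by rewrite mulf_neq0.
  by case: (proportional_prodop_cases psi2_stab j cc0 hhU M2psi) => ->;
    rewrite ?prodop_swap_twocopy.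
move: M2e; rewrite -twocopy_prodop -twocopy_prodop_at => /(congr1 (@vnorm2 R n 4)).
rewrite vnorm2Z !vnorm2_twocopy (vnorm2_prodop_at_ket _ _ gram_h) Da mulr1 cabs2M.
rewrite -!expr2 mulr1 => /eqP; rewrite eqrXn2 ?vnorm2_ge0 ?cabs2_ge0 //.
by move=> /eqP ->.
Qed.

Lemma single_copy_branch_le (M : 'I_n -> 'M[C]_2) c :
  proportional (prodop M psi) (vscale c psi1) ->
  vnorm2 (prodop M psi) <= vnorm2 psi1 * vnorm2 (prodop M (ket (cfg_at j a))).
Proof.
case=> c' Mpsi; rewrite Mpsi vscaleA vnorm2Z.
have [->|cc0] := eqVneq (c' * c) 0.
  by rewrite cabs2_ofR expr0n mul0r mulr_ge0 ?vnorm2_ge0.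
by rewrite mulrC (single_copy_cabs2 (M := M) cc0) // Mpsi vscaleA.
Qed.

Lemma single_copy_norm_gt0 : 0 < vnorm2 psi1.
Proof.
apply: lt_le_trans (vnorm2_prodop_at_ge _ _ gram_h (fun k => proj1 (andP (D_bounds k)))).
by rewrite psi_normed mulr1.
Qed.

Lemma single_copy_max_sep_prob :
  is_max_sep_prob psi (vscale (ofR (Num.sqrt (vnorm2 psi1))^-1) psi1)
    (Num.sqrt (vnorm2 psi1) ^+ 2).
Proof.
have psi1_gt0 := single_copy_norm_gt0; set n1 := Num.sqrt _.
have n1E : n1 ^+ 2 = vnorm2 psi1 by rewrite sqr_sqrtr // ltW.
have n10 : n1 != 0 by rewrite sqrtr_eq0 -ltNge.
rewrite n1E; apply: is_max_sep_probP => [K q sepK succK|].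
  have g_ge0 M : 0 <= vnorm2 psi1 * vnorm2 (prodop M (ket (cfg_at j a))).
    by rewrite mulr_ge0 ?vnorm2_ge0.
  apply: le_trans (success_prob_le g_ge0 (fun M => @single_copy_branch_le M _) succK) _.
  rewrite -mulr_sumr ler_piMr ?vnorm2_ge0 //.
  by rewrite -(vnorm2_ket R (cfg_at j a)); apply: sepK.
exists [:: at_party j h].
  move=> v; rewrite big_seq1 (vnorm2_prodop_at _ _ gram_h) /vnorm2.
  apply: ler_sum => y _; rewrite ler_piMl ?cabs2_ge0 //.
  by case/andP: (D_bounds (y j)).
exists [:: true]; split => //; split.
  case=> // _; split => // _; exists (ofR n1).
  by rewrite vscaleA -ofRM mulfV // vscale1.
by rewrite !big_seq1.
Qed.

End SingleCopy.

End SuccessProbability.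

Lemma gt0_1Dsqr (F : realFieldType) (x : F) : 0 < 1 + x ^+ 2.
Proof. by rewrite ltr_pwDl // sqr_ge0. Qed.

Lemma ltr_2div_1Dsqr (F : realFieldType) (x N : F) :
  0 < N -> x ^+ 2 < 1 -> N < 2 / (1 + x ^+ 2) * N.
Proof.
move=> N_gt0 x2_lt1; rewrite ltr_pMl // ltr_pdivlMr ?mul1r; first lra.
exact: gt0_1Dsqr.
Qed.

Section TwoCopyTransformation.
Variable R : realType.
Local Notation C := R[i].

Variables (n : nat) (j : 'I_n) (psi : vec R n 2) (eps : R) (h1 h2 : 'M[C]_2).
Variables e1 e2 : 'I_2 -> R.
Hypothesis psi2_stab : stabilizer_is_swap (twocopy psi psi).
Hypotheses (h1U : h1 \in unitmx) (h2U : h2 \in unitmx).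
Hypothesis gram_h1 : adj h1 *m h1 = diag_mx (\row_k ofR (e1 k)).
Hypothesis gram_h2 : adj h2 *m h2 = diag_mx (\row_k ofR (e2 k)).
Hypotheses (e10 : e1 0 = 1) (e11 : e1 1 = eps) (e20 : e2 0 = eps) (e21 : e2 1 = 1).

Local Notation src := (twocopy psi psi).
Local Notation G := (at_party j (h1 *t h2)).
Local Notation NN := (vnorm2 (prodop G src)).
Local Notation e a := (ket (cfg_at j a)).
Local Notation T M a b := (vnorm2 (prodop M (twocopy (e a) (e b)))).

Lemma vnorm2_prodop_tens_ket a b : T G a b = e1 a * e2 b.
Proof.
by rewrite -twocopy_prodop_at vnorm2_twocopy (vnorm2_prodop_at_ket _ _ gram_h1)
  (vnorm2_prodop_at_ket _ _ gram_h2).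
Qed.

Lemma two_copy_cabs2 (M : 'I_n -> 'M[C]_4) c :
  c != 0 -> prodop M src = vscale c (prodop G src) ->
  cabs2 c * (1 + eps ^+ 2) = T M 0 1 + T M 1 0.
Proof.
move=> c0 Msrc; have GU i : G i \in unitmx by rewrite at_party_unit // tensmx_unit.
case: (proportional_prodop_cases psi2_stab j c0 GU Msrc) => Mv; rewrite !Mv
  ?prodop_swap_twocopy !vnorm2Z !vnorm2_prodop_tens_ket e10 e11 e20 e21; ring.
Qed.

Lemma two_copy_branch_le (M : 'I_n -> 'M[C]_4) t :
  proportional (prodop M src) (vscale t (prodop G src)) ->
  vnorm2 (prodop M src) <= NN / (1 + eps ^+ 2) * (T M 0 1 + T M 1 0).
Proof.
case=> c Msrc; rewrite Msrc vscaleA vnorm2Z.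
have [->|ct0] := eqVneq (c * t) 0.
  by rewrite cabs2_ofR expr0n mul0r mulr_ge0 ?addr_ge0 ?divr_ge0 ?vnorm2_ge0 ?ltW ?gt0_1Dsqr.
rewrite -(two_copy_cabs2 ct0); last by rewrite Msrc vscaleA.
rewrite [X in _ <= X](_ : _ = cabs2 (c * t) * NN) //.
by field; rewrite gt_eqF ?gt0_1Dsqr.
Qed.

Lemma two_copy_sep_prob_le (K : kraus R n 4) t q :
  separable_op K -> success_prob K src (vscale t (prodop G src)) q ->
  q <= 2 / (1 + eps ^+ 2) * NN.
Proof.
move=> sepK succK.
have g_ge0 M : 0 <= NN / (1 + eps ^+ 2) * (T M 0 1 + T M 1 0).
  by rewrite mulr_ge0 ?addr_ge0 ?divr_ge0 ?vnorm2_ge0 // ltW ?gt0_1Dsqr.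
apply: le_trans (success_prob_le g_ge0 (fun M => @two_copy_branch_le M t) succK) _.
have sum_T a b : \sum_(M <- K) T M a b <= 1.
  by have := sepK (twocopy (e a) (e b)); rewrite vnorm2_twocopy !vnorm2_ket mulr1.
rewrite -mulr_sumr big_split /= (_ : 2 / _ * NN = NN / (1 + eps ^+ 2) * (1 + 1)); last by ring.
by rewrite ler_wpM2l ?lerD // divr_ge0 ?vnorm2_ge0 ?ltW ?gt0_1Dsqr.
Qed.

Definition filter4 : 'M[C]_4 := ofR (Num.sqrt (1 + eps ^+ 2)^-1) *: (h1 *t h2).

Definition filter4_weight (k : 'I_4) : R := (1 + eps ^+ 2)^-1 * (e1 (hi4 k) * e2 (lo4 k)).

Lemma gram_filter4 : adj filter4 *m filter4 = diag_mx (\row_k ofR (filter4_weight k)).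
Proof.
have inv_gt0 : 0 < (1 + eps ^+ 2)^-1 by rewrite invr_gt0 gt0_1Dsqr.
rewrite /filter4 adjmxZ adj_tens -scalemxAl -scalemxAr.
rewrite tensmx_mul4 gram_h1 gram_h2 scalerA conj_ofR -ofRM -expr2 sqr_sqrtr ?ltW //.
apply/matrixP => k l; rewrite mxE tensE !mxE -[l in k == l]combK eq_comb /filter4_weight.
by case: (hi4 k == hi4 l); case: (lo4 k == lo4 l);
  rewrite /= ?mulr0n ?mulr1n ?ofRM ?mul0r ?mulr0.
Qed.

Lemma filter4_weight_swap_le1 k : filter4_weight k + filter4_weight (sw4 k) <= 1.
Proof.
rewrite /filter4_weight hi4_sw lo4_sw -mulrDr mulrC.
rewrite -ler_pdivlMr ?invr_gt0 ?gt0_1Dsqr // invrK mul1r.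
have bit (x : 'I_2) : x = 0 \/ x = 1 by case: x => [[|[|x]] // ?]; [left|right]; apply: val_inj.
move: (sqr_ge0 (eps - 1)); rewrite !expr2.
by case: (bit (hi4 k)) => ->; case: (bit (lo4 k)) => ->;
  rewrite ?e10 ?e11 ?e20 ?e21 ?mul1r ?mulr1; nra.
Qed.

Fixpoint swap_rounds (l : seq 'I_n) : locc R n 4 :=
  if l is i :: l' then @LRound R n 4 i 1 (fun _ => swap4 R) (fun _ => swap_rounds l')
  else @LStop R n 4.

Lemma branches_swap_rounds l : uniq l ->
  branches (swap_rounds l) = [:: fun i => if i \in l then swap4 R else 1%:M].
Proof.
elim: l => [_|i l IH /andP [il ul]] /=.
  by congr [:: _]; apply: functional_extensionality.
rewrite IH // enum_ordSl enum_ord0 /=; congr [:: _]; apply: functional_extensionality => i'.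
rewrite in_cons /at_party; case: eqP => [->|_] /=; first by rewrite (negbTE il) mul1mx.
by rewrite mulmx1.
Qed.

Lemma swap_rounds_ok l : locc_ok (swap_rounds l).
Proof. by elim: l => //= i l IH; split => // v; rewrite big_ord1 cvnorm2_swap4. Qed.

Definition other_parties := [seq i <- enum 'I_n | i != j].

Definition two_copy_protocol : locc R n 4 :=
  @LRound R n 4 j 2 (fun k => if k == 0 then filter4 else filter4 *m swap4 R)
    (fun k => if k == 0 then @LStop R n 4 else swap_rounds other_parties).

Lemma prodop_branches_two_copy_protocol :
  map (@prodop R n 4) (branches two_copy_protocol) =
  [:: prodop (at_party j filter4);
      fun v => prodop (at_party j filter4) (prodop (fun _ => swap4 R) v)].
Proof.
rewrite /= !enum_ordSl enum_ord0 /= branches_swap_rounds; last first.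
  by rewrite filter_uniq ?enum_uniq.
congr [:: _; _]; first by apply: (@eq_prodop R n 4) => i; rewrite mul1mx.
apply: (@functional_extensionality (vec R n 4)) => v; rewrite prodopM; congr prodop.
apply: functional_extensionality => i; rewrite mem_filter mem_enum andbT /at_party.
by case: (i == j); rewrite /= ?mulmx1 ?mul1mx.
Qed.

Lemma two_copy_protocol_ok : locc_ok two_copy_protocol.
Proof.
split; last by move=> k; case: (k == 0) => //; apply: swap_rounds_ok.
move=> v; rewrite !big_ord_recl big_ord0 addr0 /= -mulmxA !(cvnorm2_mul_diag _ gram_filter4).
under [X in _ + X]eq_bigr do rewrite swap4_mul_col.
rewrite [X in _ + X](reindex_inj (inv_inj sw4K)) /=.
under [X in _ + X]eq_bigr do rewrite sw4K.
rewrite -big_split /cvnorm2; apply: ler_sum => k _.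
by rewrite /= -mulrDl ler_piMl ?cabs2_ge0 ?filter4_weight_swap_le1.
Qed.

Lemma two_copy_protocol_separable : separable_op (branches two_copy_protocol).
Proof.
move=> v; rewrite -(big_map (@prodop R n 4) xpredT (fun f => vnorm2 (f v))).
rewrite prodop_branches_two_copy_protocol big_cons big_seq1 /=.
rewrite !(vnorm2_prodop_at _ _ gram_filter4).
under [X in _ + X]eq_bigr do rewrite prodop_swapE.
rewrite [X in _ + X](reindex_inj (inv_inj (@swfK n))) /=.
under [X in _ + X]eq_bigr do rewrite swfK ffunE.
rewrite -big_split /vnorm2; apply: ler_sum => y _.
by rewrite /= -mulrDl ler_piMl ?cabs2_ge0 ?filter4_weight_swap_le1.
Qed.

Lemma two_copy_protocol_success t : t != 0 ->
  success_prob (branches two_copy_protocol) src (vscale t (prodop G src))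
    (2 / (1 + eps ^+ 2) * NN).
Proof.
move=> t0; set s := Num.sqrt (1 + eps ^+ 2)^-1.
have filter_src : prodop (at_party j filter4) src = vscale (ofR s) (prodop G src).
  exact: prodop_atZ.
have := prodop_branches_two_copy_protocol.
case: (branches _) => [|B0 [|B1 []]] //= [E0 E1].
exists [:: true; true]; split => //; split.
  case=> [|[|k]] // _; split => // _; exists (ofR s / t); rewrite vscaleA divfK //.
    by rewrite E0.
  by rewrite E1 prodop_swap_twocopy.
rewrite /= big_cons big_seq1 E0 E1 prodop_swap_twocopy filter_src vnorm2Z cabs2_ofR.
by rewrite sqr_sqrtr ?invr_ge0 ?addr_ge0 ?sqr_ge0 //; ring.
Qed.

Lemma two_copy_max_sep_prob t : t != 0 ->
  is_max_sep_prob src (vscale t (prodop G src)) (2 / (1 + eps ^+ 2) * NN).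
Proof.
move=> t0; apply: is_max_sep_probP => [K q|]; first exact: two_copy_sep_prob_le.
exists (branches two_copy_protocol); first exact: two_copy_protocol_separable.
exact: two_copy_protocol_success.
Qed.

Lemma two_copy_locc t : t != 0 ->
  exists P : locc R n 4, locc_ok P /\
    success_prob (branches P) src (vscale t (prodop G src)) (2 / (1 + eps ^+ 2) * NN).
Proof.
move=> t0; exists two_copy_protocol; split; first exact: two_copy_protocol_ok.
exact: two_copy_protocol_success.
Qed.

End TwoCopyTransformation.

Theorem mainTheorem6 (R : realType) (n : nat) (last : 'I_n)
    (psi : vec R n 2) (eps : R) (h1 h2 : 'M[R[i]]_2) :
  val last = n.-1 ->
  vnorm2 psi = 1 ->
  (forall op : vec R n 4 -> vec R n 4,
     in_stabilizer (twocopy psi psi) op <->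
     (op = prodop (fun _ => 1%:M) \/ op = prodop (fun _ => swap4 R))) ->
  0 < eps < 1 ->
  h1 \in unitmx -> h2 \in unitmx ->
  adj h1 *m h1 = diag_mx (\row_(j < 2) (if j == 0 then 1 else ofR eps)) ->
  adj h2 *m h2 = diag_mx (\row_(j < 2) (if j == 0 then ofR eps else 1)) ->
  let psi1 := prodop (at_party last h1) psi in
  let psi2 := prodop (at_party last h2) psi in
  let n1 := Num.sqrt (vnorm2 psi1) in
  let n2 := Num.sqrt (vnorm2 psi2) in
  let source := twocopy psi psi in
  let target := vscale (ofR (n1 * n2)^-1) (twocopy psi1 psi2) in
  let p := 2 / (1 + eps ^+ 2) * (n1 * n2) ^+ 2 in
  [/\ is_max_sep_prob source target p,
      (exists P : locc R n 4, locc_ok P /\ success_prob (branches P) source target p),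
      (n1 * n2) ^+ 2 < p,
      is_max_sep_prob psi (vscale (ofR n1^-1) psi1) (n1 ^+ 2) &
      is_max_sep_prob psi (vscale (ofR n2^-1) psi2) (n2 ^+ 2)].
Proof.
move=> _ psi_normed stab /andP [eps_gt0 eps_lt1] h1U h2U gram1 gram2.
move=> psi1 psi2 n1 n2 source target p.
(* h_i may act on any party. *)
have gram_h1 := etrans gram1 (congr1 diag_mx (row_if_ofR 1 eps)).
have gram_h2 := etrans gram2 (congr1 diag_mx (row_if_ofR eps 1)).
have bounds1 (k : 'I_2) : eps <= (if k == 0 then 1 else eps) <= 1.
  by case: (k == 0); rewrite lexx ltW.
have bounds2 (k : 'I_2) : eps <= (if k == 0 then eps else 1) <= 1.
  by case: (k == 0); rewrite lexx ltW.
have single1 :=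
  single_copy_max_sep_prob last stab (a := 0) h1U gram_h1 erefl eps_gt0 bounds1 psi_normed.
have single2 :=
  single_copy_max_sep_prob last stab (a := 1) h2U gram_h2 erefl eps_gt0 bounds2 psi_normed.
have psi1_gt0 := single_copy_norm_gt0 last gram_h1 eps_gt0 bounds1 psi_normed.
have psi2_gt0 := single_copy_norm_gt0 last gram_h2 eps_gt0 bounds2 psi_normed.
have n12_gt0 : 0 < n1 * n2 by rewrite mulr_gt0 ?sqrtr_gt0.
have target_norm : vnorm2 (prodop (at_party last (h1 *t h2)) source) = (n1 * n2) ^+ 2.
  by rewrite -twocopy_prodop_at vnorm2_twocopy exprMn !sqr_sqrtr ?ltW.
have -> : target = vscale (ofR (n1 * n2)^-1) (prodop (at_party last (h1 *t h2)) source).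
  by rewrite /target twocopy_prodop_at.
have t0 : ofR (n1 * n2)^-1 != 0 by rewrite ofR_eq0 invr_eq0 gt_eqF.
rewrite /p -target_norm; split => //.
- exact: (two_copy_max_sep_prob last stab h1U h2U gram_h1 gram_h2 erefl erefl erefl erefl t0).
- exact: (two_copy_locc last psi gram_h1 gram_h2 erefl erefl erefl erefl t0).
by rewrite ltr_2div_1Dsqr ?target_norm ?exprn_gt0 // expr2; nra.
Qed.
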